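(* If $G$ is a connected bipartite graph, then $\mathrm{GP}(G)$ is an integer.
   Context: All graphs are simple and finite. For a connected graph $G$, $d_G(u,v)$ denotes the shortest-path distance and $\mathrm{Aut}(G)$ the automorphism group. The Graovac-Pisanski index is $$\mathrm{GP}(G)=\frac{|V(G)|}{2|\mathrm{Aut}(G)|}\sum_{u\in V(G)}\sum_{\alpha\in \mathrm{Aut}(G)} d_G(u,\alpha(u)).$$ *)

From HB Require Import structures.
From mathcomp Require Import all_boot all_order fingroup perm all_algebra.
Set Implicit Arguments. Unset Strict Implicit. Unset Printing Implicit Defensive.
Import GRing.Theory Num.Theory.

Definition simple_graph (T : finType) (e : rel T) : Prop :=
  symmetric e /\ irreflexive e.

Definition connected_graph (T : finType) (e : rel T) : Prop :=
  forall x y : T, connect e x y.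

Definition bipartite (T : finType) (e : rel T) : Prop :=
  exists c : T -> bool, forall x y, e x y -> c x != c y.

Definition walk_of_len (T : finType) (e : rel T) (n : nat) (x y : T) : bool :=
  [exists p : n.-tuple T, path e x p && (last x p == y)].

(* Shortest-path distance: least n (searched among 0..#|T|-1, which suffices
   in a connected graph) such that a walk of length n from x to y exists. *)
Definition gdist (T : finType) (e : rel T) (x y : T) : nat :=
  find (fun n => walk_of_len e n x y) (iota 0 #|T|).

Definition Aut (T : finType) (e : rel T) : {set {perm T}} :=
  [set s : {perm T} | [forall x, [forall y, e (s x) (s y) == e x y]]].

Definition GP (T : finType) (e : rel T) : rat :=
  ((#|T|%:R / (2 * #|Aut e|)%N%:R) *
   (\sum_(u : T) \sum_(a in Aut e) gdist e u (a u))%N%:R)%R.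

From HB Require Import structures.
From mathcomp Require Import all_boot all_order fingroup perm all_algebra.
Import GRing.Theory Num.Theory.
From mathcomp Require Import action ring.

Set Implicit Arguments. Unset Strict Implicit. Unset Printing Implicit Defensive.

(* Write GP(G) = n S / (2 |Aut G|) with S = sum_u sum_a d(u, a u).  Grouping
   the vertices into Aut-orbits, each orbit O contributes |Aut G| times the
   sum of d(x, v) over v in O, for any fixed x in O; hence |Aut G| divides S.
   If n is odd, no automorphism can exchange the two colour classes (they
   would have equal size), so every d(u, a u) is even, and then 2 |Aut G|
   divides S.  Either way 2 divides n S / |Aut G|. *)

Section OrbitSums.
Variables (T : finType) (G : {group {perm T}}) (f : T -> T -> nat).
Hypothesis f_perm : forall a x y, a \in G -> f (a x) (a y) = f x y.

Definition orbit_sum x := (\sum_(v in orbit 'P G x) f x v)%N.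

Lemma sum_moves_stab x :
  (\sum_(a in G) f x (a x) = #|('C_G[x | 'P])%g| * orbit_sum x)%N.
Proof.
rewrite (partition_big (aperm x) (mem (orbit 'P G x))); last exact: mem_orbit.
rewrite big_distrr /=; apply: eq_bigr => v /orbitP[b Gb <-].
transitivity (\sum_(a in amove 'P G x (aperm x b)) f x (aperm x b))%N.
  by apply: eq_big => [a | a /andP[_ /eqP <-] //]; rewrite !inE.
by rewrite sum_nat_const amove_act ?card_rcoset ?subsetT.
Qed.

Lemma sum_moves_perm x b : b \in G ->
  (\sum_(a in G) f (b x) (a (b x)) = \sum_(a in G) f x (a x))%N.
Proof.
move=> Gb; have conj_inj : injective (fun a : {perm T} => (b^-1 * a * b)%g).
  by move=> a1 a2 /mulIg /mulgI.
rewrite (reindex_inj conj_inj) /=; apply: eq_big => [a | a _].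
  by rewrite groupMr // groupMl ?groupV.
by rewrite !permM permK f_perm.
Qed.

Lemma sum_moves_orbit x :
  (\sum_(u in orbit 'P G x) \sum_(a in G) f u (a u) = #|G| * orbit_sum x)%N.
Proof.
transitivity (\sum_(u in orbit 'P G x) \sum_(a in G) f x (a x))%N.
  by apply: eq_bigr => _ /orbitP[b Gb <-]; rewrite sum_moves_perm.
by rewrite sum_nat_const sum_moves_stab mulnA card_orbit_stab.
Qed.

Lemma dvdn_sum_moves d : (forall x, d %| orbit_sum x) ->
  #|G| * d %| \sum_u \sum_(a in G) f u (a u).
Proof.
move=> d_orbit; have actsT : [acts G, on [set: T] | 'P].
  by apply/actsP => a _ x; rewrite !inE.
rewrite (eq_bigl [in [set: T]]) => [|u]; last by rewrite inE.
rewrite (set_partition_big _ (orbit_partition actsT)); apply: dvdn_sum.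
by move=> _ /imsetP[x _ ->]; rewrite sum_moves_orbit dvdn_pmul2l ?cardG_gt0.
Qed.

End OrbitSums.

Lemma card_even_of_colour_swap (T : finType) (s : {perm T}) (c : T -> bool) :
  (forall x, c (s x) = ~~ c x) -> ~~ odd #|T|.
Proof.
move=> swap; pose V := [set x | c x].
have preimV : s @^-1: V = ~: V by apply/setP => x; rewrite !inE swap.
by rewrite -(cardsC V) -preimV card_preimset ?addnn ?odd_double //; apply: perm_inj.
Qed.

Section GraphAutomorphisms.
Variables (T : finType) (e : rel T).

Lemma AutP (a : {perm T}) :
  reflect (forall x y, e (a x) (a y) = e x y) (a \in Aut e).
Proof.
rewrite inE; apply: (iffP forallP) => [ea x y | ea x].
  by have /forallP/(_ y)/eqP := ea x.
by apply/forallP => y; rewrite ea.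
Qed.

Lemma Aut_group_set : group_set (Aut e).
Proof.
apply/group_setP; split; first by apply/AutP => x y; rewrite !perm1.
by move=> a b /AutP ea /AutP eb; apply/AutP => x y; rewrite !permM eb ea.
Qed.

Canonical Aut_group := Group Aut_group_set.

Lemma walk_of_len_Aut (a : {perm T}) n x y : a \in Aut e ->
  walk_of_len e n x y -> walk_of_len e n (a x) (a y).
Proof.
move=> /AutP ea /existsP[p /andP[ep /eqP <-]]; apply/existsP.
exists (map_tuple a p); rewrite /= last_map eqxx andbT.
by elim: {p}(val p) x ep => //= z p IHp x /andP[exz /IHp ->]; rewrite ea exz.
Qed.

Lemma gdist_Aut (a : {perm T}) x y : a \in Aut e ->
  gdist e (a x) (a y) = gdist e x y.
Proof.
move=> Aa; apply: eq_find => n; apply/idP/idP; last exact: walk_of_len_Aut.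
have Aa' : (a^-1)%g \in Aut_group by rewrite groupV.
by move/(walk_of_len_Aut Aa'); rewrite -!permM mulgV !perm1.
Qed.

Lemma walk_of_len_gdist x y : connect e x y -> walk_of_len e (gdist e x y) x y.
Proof.
move=> /connectP[p ep ->]; have [q eq uq _] := shortenP ep.
have short : size q < #|T|.
  by have := max_card (mem (x :: q)); rewrite (card_uniqP uq).
have has_walk : has (fun n => walk_of_len e n x (last x q)) (iota 0 #|T|).
  apply/hasP; exists (size q); first by rewrite mem_iota.
  by apply/existsP; exists (in_tuple q); rewrite /= eq eqxx.
have := nth_find 0 has_walk; rewrite /gdist nth_iota ?add0n //.
by move: has_walk; rewrite has_find size_iota.
Qed.

Variable c : T -> bool.
Hypothesis c_proper : forall x y, e x y -> c x != c y.

Lemma odd_path x p : path e x p -> odd (size p) = (c x != c (last x p)).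
Proof.
elim: p x => [|y p IHp] x /=; first by rewrite eqxx.
move=> /andP[/c_proper cxy /IHp ->].
by move: cxy; case: (c x) (c y) (c (last y p)) => [] [] [].
Qed.

Lemma odd_gdist x y : connect e x y -> odd (gdist e x y) = (c x != c y).
Proof.
move=> /walk_of_len_gdist /existsP[p /andP[ep /eqP pxy]].
by rewrite -{1}(size_tuple p) (odd_path ep) pxy.
Qed.

Hypothesis e_connected : connected_graph e.

(* Along an edge both c and c \o a flip, so whether a swaps colours at a vertex
   does not depend on the vertex. *)
Lemma Aut_colour_swap (a : {perm T}) x y : a \in Aut e ->
  (c (a x) == c x) = (c (a y) == c y).
Proof.
move=> /AutP ea; pose fixes := [pred z | c (a z) == c z].
have closed_fixes : closed e fixes.
  move=> u v /[dup] /c_proper cuv; rewrite -ea => /c_proper cauv; rewrite !inE.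
  by move: cuv cauv; case: (c u) (c v) (c (a u)) (c (a v)) => [] [] [] [].
exact: (closed_connect closed_fixes (e_connected x y)).
Qed.

Lemma Aut_colour_odd (a : {perm T}) x : odd #|T| -> a \in Aut e ->
  c (a x) = c x.
Proof.
move=> oddT Aa; apply/eqP; apply: contraTT oddT => swapx.
apply: (@card_even_of_colour_swap _ a c) => y.
by move: swapx; rewrite (Aut_colour_swap x y Aa); case: (c (a y)) (c y) => [] [].
Qed.

Lemma even_orbit_sum_gdist x : odd #|T| ->
  2 %| orbit_sum Aut_group (gdist e) x.
Proof.
move=> oddT; apply: dvdn_sum => _ /orbitP[a Aa <-].
by rewrite dvdn2 odd_gdist ?Aut_colour_odd ?eqxx.
Qed.

End GraphAutomorphisms.

Theorem theorem3p4 (T : finType) (e : rel T) :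
  simple_graph e -> connected_graph e -> bipartite e ->
  exists z : int, GP e = (z%:~R)%R.
Proof.
move=> _ e_connected [c c_proper].
set S := (\sum_u \sum_(a in Aut e) gdist e u (a u))%N.
have dvd_orbit_sums := @dvdn_sum_moves T (Aut_group e) (gdist e)
  (fun a x y Aa => gdist_Aut x y Aa).
have Aut_gt0 : (0 < #|Aut e|)%N := cardG_gt0 (Aut_group e).
have /dvdnP[K SE] : #|Aut e| %| S by rewrite -[#|_|]muln1 dvd_orbit_sums.
have even_nK : 2 %| #|T| * K.
  have [oddT | evenT] := boolP (odd #|T|); last by rewrite dvdn_mulr ?dvdn2.
  have even_orbits x := even_orbit_sum_gdist c_proper e_connected x oddT.
  rewrite dvdn_mull //; have := dvd_orbit_sums 2 even_orbits.
  by rewrite -/S SE [K * _]mulnC dvdn_pmul2l.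
exists ((#|T| * K) %/ 2)%N; rewrite /GP -/S SE.
have -> : (((#|T| * K) %/ 2)%:Z%:~R : rat) = ((#|T| * K)%:R / 2)%R.
  by rewrite -[in RHS](divnK even_nK) natrM mulfK.
by rewrite !natrM; field; rewrite pnatr_eq0 -lt0n.
Qed.
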